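(* Let $\mathcal A$ be an abelian category and let $0\to F\to M\to C\to 0$ be a fully invariant short exact sequence in $\mathcal A$. (1) Assume that $M$ is (strongly) self-$F$-split. Then: (i) for every (fully invariant) direct summand $K$ of $M$, $F\cap K$ is a (fully invariant) direct summand of $M$; (ii) $M$ has SIP for (fully invariant) direct summands containing $F$. (2) Assume that $M$ is dual (strongly) self-$F$-split. Then: (i) for every (fully invariant) direct summand $K$ of $M$, $F+K$ is a (fully invariant) direct summand of $M$; (ii) $M$ has SSP for (fully invariant) direct summands contained in $F$.
   Context: Convention: each statement containing parenthetical words holds in two versions: one obtained by deleting all parenthetical words and one obtained by keeping all of them. Let $\mathcal A$ be an abelian category. A morphism $s:X\to Y$ is a section if $ts=1_X$ for some $t$, and a retraction if $st=1_Y$ for some $t$. A monomorphism $i:K\to M$ is fully invariant if for every morphism $h:M\to M$ there is $\alpha:K\to K$ with $hi=i\alpha$; an epimorphism $d:M\to C$ is fully coinvariant if for every $h:M\to M$ there is $\beta:C\to C$ with $dh=\beta d$. A subobject is fully invariant if its inclusion is. A short exact sequence $0\to F\xrightarrow{i}N\xrightarrow{d}C\to 0$ is fully invariant if $i$ is fully invariant. A (fully invariant) direct summand is a subobject whose inclusion is a (fully invariant) section. For an object $M$ and a fully invariant short exact sequence $0\to F\xrightarrow{i}N\xrightarrow{d}C\to 0$: $N$ is (strongly) $M$-$F$-split if for every morphism $g:M\to N$, $\ker(dg)$ is a (fully invariant) section; $N$ is dual (strongly) $M$-$F$-split if for every morphism $g:N\to M$, $\mathrm{coker}(gi)$ is a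 (fully coinvariant) retraction. Self-versions: take $M=N$. An object $M$ has the summand intersection property (SIP) for a class $\mathcal C$ of direct summands of $M$ if the intersection of any finite family of members of $\mathcal C$ belongs to $\mathcal C$; it has the summand sum property (SSP) for $\mathcal C$ if the sum of any finite family of members of $\mathcal C$ belongs to $\mathcal C$. *)

From HB Require Import structures.
From mathcomp Require Import all_boot all_algebra.
Set Implicit Arguments. Unset Strict Implicit. Unset Printing Implicit Defensive.
Import GRing.Theory.
Local Open Scope ring_scope.

Record cat_data := CatData {
  obj :> Type;
  ahom : obj -> obj -> zmodType;
  acmp : forall (A B D : obj), ahom B D -> ahom A B -> ahom A D;
  idm : forall A : obj, ahom A A }.
Arguments ahom {c}.
Arguments acmp {c A B D}.
Arguments idm {c}.

Section Basic.
Context {C : cat_data}.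

Definition is_kernel (A B K : C) (f : ahom A B) (k : ahom K A) : Prop :=
  acmp f k = 0 /\
  forall (X : C) (x : ahom X A), acmp f x = 0 ->
    exists! u : ahom X K, acmp k u = x.

Definition is_cokernel (A B Q : C) (f : ahom A B) (c : ahom B Q) : Prop :=
  acmp c f = 0 /\
  forall (X : C) (x : ahom B X), acmp x f = 0 ->
    exists! u : ahom Q X, acmp u c = x.

Definition mono (A B : C) (f : ahom A B) : Prop :=
  forall (X : C) (g h : ahom X A), acmp f g = acmp f h -> g = h.

Definition epi (A B : C) (f : ahom A B) : Prop :=
  forall (X : C) (g h : ahom B X), acmp g f = acmp h f -> g = h.

Definition is_abelian : Prop :=
  (forall (A B D E : C) (f : ahom D E) (g : ahom B D) (h : ahom A B),
      acmp f (acmp g h) = acmp (acmp f g) h) /\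
  (forall (A B : C) (f : ahom A B), acmp (idm B) f = f /\ acmp f (idm A) = f) /\
  (forall (A B D : C) (f f' : ahom B D) (g : ahom A B),
      acmp (f + f') g = acmp f g + acmp f' g) /\
  (forall (A B D : C) (f : ahom B D) (g g' : ahom A B),
      acmp f (g + g') = acmp f g + acmp f g') /\
  (exists Z : C, forall A : C,
      (forall f g : ahom Z A, f = g) /\ (forall f g : ahom A Z, f = g)) /\
  (forall A B : C, exists (S : C) (i1 : ahom A S) (i2 : ahom B S)
      (p1 : ahom S A) (p2 : ahom S B),
      [/\ acmp p1 i1 = idm A, acmp p2 i2 = idm B, acmp p1 i2 = 0,
          acmp p2 i1 = 0 & acmp i1 p1 + acmp i2 p2 = idm S]) /\
  (forall (A B : C) (f : ahom A B), exists (K : C) (k : ahom K A), is_kernel f k) /\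
  (forall (A B : C) (f : ahom A B), exists (Q : C) (c : ahom B Q), is_cokernel f c) /\
  (forall (A B : C) (m : ahom A B), mono m ->
      exists (D : C) (f : ahom B D), is_kernel f m) /\
  (forall (A B : C) (e : ahom A B), epi e ->
      exists (D : C) (f : ahom D A), is_cokernel f e).

End Basic.
Arguments is_abelian : clear implicits.

Record abelian_category := AbelianCategory {
  acat :> cat_data;
  acat_ax : is_abelian acat }.

Section Notions.
Context {C : cat_data}.

Definition section (X Y : C) (s : ahom X Y) : Prop :=
  exists t : ahom Y X, acmp t s = idm X.

Definition retraction (X Y : C) (s : ahom X Y) : Prop :=
  exists t : ahom Y X, acmp s t = idm Y.

Definition fully_invariant (K M : C) (i : ahom K M) : Prop :=
  mono i /\ forall h : ahom M M, exists a : ahom K K, acmp h i = acmp i a.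

Definition fully_coinvariant (M D : C) (d : ahom M D) : Prop :=
  epi d /\ forall h : ahom M M, exists b : ahom D D, acmp d h = acmp b d.

Definition short_exact (F N Q : C) (i : ahom F N) (d : ahom N Q) : Prop :=
  [/\ mono i, epi d, is_kernel d i & is_cokernel i d].

Definition fi_short_exact (F N Q : C) (i : ahom F N) (d : ahom N Q) : Prop :=
  short_exact i d /\ fully_invariant i.

(* x factors through k, i.e. (as subobjects) x <= k *)
Definition factors_through (X K M : C) (x : ahom X M) (k : ahom K M) : Prop :=
  exists f : ahom X K, acmp k f = x.

(* The boolean [s] selects the version of a statement with parenthetical
   words: [s = false] deletes them, [s = true] keeps them. *)

Definition summand (s : bool) (K M : C) (k : ahom K M) : Prop :=
  section k /\ (s -> fully_invariant k).

Definition cosummand (s : bool) (M Q : C) (c : ahom M Q) : Prop :=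
  retraction c /\ (s -> fully_coinvariant c).

Definition self_split (s : bool) (F M Q : C) (i : ahom F M) (d : ahom M Q) : Prop :=
  forall (g : ahom M M) (K : C) (k : ahom K M), is_kernel (acmp d g) k -> summand s k.

Definition dual_self_split (s : bool) (F M Q : C) (i : ahom F M) (d : ahom M Q) : Prop :=
  forall (g : ahom M M) (D : C) (c : ahom M D), is_cokernel (acmp g i) c -> cosummand s c.

Definition is_meet (M : C) (I : finType) (K : I -> C) (k : forall j, ahom (K j) M)
    (P : C) (p : ahom P M) : Prop :=
  [/\ mono p, (forall j, factors_through p (k j)) &
      forall (X : C) (x : ahom X M), (forall j, factors_through x (k j)) ->
        factors_through x p].

Definition is_join (M : C) (I : finType) (K : I -> C) (k : forall j, ahom (K j) M)
    (P : C) (p : ahom P M) : Prop :=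
  [/\ mono p, (forall j, factors_through (k j) p) &
      forall (X : C) (x : ahom X M), mono x -> (forall j, factors_through (k j) x) ->
        factors_through p x].

Definition is_meet2 (A B M P : C) (a : ahom A M) (b : ahom B M) (p : ahom P M) : Prop :=
  [/\ mono p, factors_through p a, factors_through p b &
      forall (X : C) (x : ahom X M), factors_through x a -> factors_through x b ->
        factors_through x p].

Definition is_join2 (A B M P : C) (a : ahom A M) (b : ahom B M) (p : ahom P M) : Prop :=
  [/\ mono p, factors_through a p, factors_through b p &
      forall (X : C) (x : ahom X M), mono x -> factors_through a x ->
        factors_through b x -> factors_through p x].

Definition subclass (M : C) := forall K : C, ahom K M -> Prop.

Definition SIP (M : C) (Cl : subclass M) : Prop :=
  forall (I : finType) (K : I -> C) (k : forall j, ahom (K j) M),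
    (forall j, Cl (K j) (k j)) ->
    forall (P : C) (p : ahom P M), is_meet k p -> Cl P p.

Definition SSP (M : C) (Cl : subclass M) : Prop :=
  forall (I : finType) (K : I -> C) (k : forall j, ahom (K j) M),
    (forall j, Cl (K j) (k j)) ->
    forall (P : C) (p : ahom P M), is_join k p -> Cl P p.

End Notions.

(* Each part follows from the splitting hypothesis applied to one well-chosen
   endomorphism g of M.  For a summand X with inclusion x and retraction r_X
   let e_X = 1 - x r_X be the complementary idempotent.
   Meets: if F <= B, then L = ker (d g) with g = e_B a r_A is a summand.  It
   contains A /\ B, and a r_A maps L into A /\ B: e_B a r_A L is killed by d,
   so it lies in F <= B, where the idempotent e_B vanishes.  Hence A /\ B is
   a retract of L.
   Joins: if B <= F, the cokernel c of e_A b r_B i splits, say c v = 1.  The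
   image of 1 - v c lies in A + B, so 1 - v c = p y, and with a = p a' the
   map r = a' r_A + y e_A satisfies r p = 1 on A and on B, hence on A + B.
   The binary statements are the case B = F; finite families follow by
   induction, and full invariance passes to meets and joins. *)
From mathcomp Require Import all_boot all_algebra.
Set Implicit Arguments. Unset Strict Implicit. Unset Printing Implicit Defensive.
Import GRing.Theory.
Local Open Scope ring_scope.

Section AbelianCategory.
Variable C : abelian_category.
Local Notation "f ⊚ g" := (acmp f g) (at level 40, left associativity).

Lemma acmpA (A B D E : C) (f : ahom D E) (g : ahom B D) (h : ahom A B) :
  f ⊚ (g ⊚ h) = f ⊚ g ⊚ h.
Proof. by case: (acat_ax C) => H _; apply: H. Qed.

Lemma id_acmp (A B : C) (f : ahom A B) : idm B ⊚ f = f.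
Proof. by case: (acat_ax C) => _ [H _]; case: (H _ _ f). Qed.

Lemma acmp_id (A B : C) (f : ahom A B) : f ⊚ idm A = f.
Proof. by case: (acat_ax C) => _ [H _]; case: (H _ _ f). Qed.

Lemma acmpDl (A B D : C) (f f' : ahom B D) (g : ahom A B) :
  (f + f') ⊚ g = f ⊚ g + f' ⊚ g.
Proof. by case: (acat_ax C) => _ [_ [H _]]; apply: H. Qed.

Lemma acmpDr (A B D : C) (f : ahom B D) (g g' : ahom A B) :
  f ⊚ (g + g') = f ⊚ g + f ⊚ g'.
Proof. by case: (acat_ax C) => _ [_ [_ [H _]]]; apply: H. Qed.

Lemma acmp0l (A B D : C) (g : ahom A B) : (0 : ahom B D) ⊚ g = 0.
Proof. by apply: (@addrI _ (0 ⊚ g)); rewrite -acmpDl !addr0. Qed.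

Lemma acmp0r (A B D : C) (f : ahom B D) : f ⊚ (0 : ahom A B) = 0.
Proof. by apply: (@addrI _ (f ⊚ 0)); rewrite -acmpDr !addr0. Qed.

Lemma acmpNl (A B D : C) (f : ahom B D) (g : ahom A B) : (- f) ⊚ g = - (f ⊚ g).
Proof. by apply/eqP; rewrite -subr_eq0 opprK -acmpDl addNr acmp0l. Qed.

Lemma acmpNr (A B D : C) (f : ahom B D) (g : ahom A B) : f ⊚ (- g) = - (f ⊚ g).
Proof. by apply/eqP; rewrite -subr_eq0 opprK -acmpDr addNr acmp0r. Qed.

Lemma acmpBl (A B D : C) (f f' : ahom B D) (g : ahom A B) :
  (f - f') ⊚ g = f ⊚ g - f' ⊚ g.
Proof. by rewrite acmpDl acmpNl. Qed.

Lemma acmpBr (A B D : C) (f : ahom B D) (g g' : ahom A B) :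
  f ⊚ (g - g') = f ⊚ g - f ⊚ g'.
Proof. by rewrite acmpDr acmpNr. Qed.

Lemma zero_object_ex : exists Z : C, forall A : C,
  (forall f g : ahom Z A, f = g) /\ (forall f g : ahom A Z, f = g).
Proof. by case: (acat_ax C) => _ [_ [_ [_ [H _]]]]. Qed.

Lemma biproduct_ex (A B : C) : exists (S : C) (i1 : ahom A S) (i2 : ahom B S)
    (p1 : ahom S A) (p2 : ahom S B),
  [/\ p1 ⊚ i1 = idm A, p2 ⊚ i2 = idm B, p1 ⊚ i2 = 0,
      p2 ⊚ i1 = 0 & i1 ⊚ p1 + i2 ⊚ p2 = idm S].
Proof. by case: (acat_ax C) => _ [_ [_ [_ [_ [H _]]]]]. Qed.

Lemma kernel_ex (A B : C) (f : ahom A B) : exists (K : C) (k : ahom K A), is_kernel f k.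
Proof. by case: (acat_ax C) => _ [_ [_ [_ [_ [_ [H _]]]]]]. Qed.

Lemma cokernel_ex (A B : C) (f : ahom A B) :
  exists (Q : C) (c : ahom B Q), is_cokernel f c.
Proof. by case: (acat_ax C) => _ [_ [_ [_ [_ [_ [_ [H _]]]]]]]. Qed.

Lemma mono_is_kernel (A B : C) (m : ahom A B) :
  mono m -> exists (D : C) (f : ahom B D), is_kernel f m.
Proof. by case: (acat_ax C) => _ [_ [_ [_ [_ [_ [_ [_ [H _]]]]]]]]; apply: H. Qed.

Lemma kernel_mono (A B K : C) (f : ahom A B) (k : ahom K A) : is_kernel f k -> mono k.
Proof.
move=> [fk0 H] X g h E.
have [u [_ U]] : exists! u, k ⊚ u = k ⊚ g by apply: H; rewrite acmpA fk0 acmp0l.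
by rewrite -(U g erefl) (U h (esym E)).
Qed.

Lemma kernel_factor (A B K X : C) (f : ahom A B) (k : ahom K A) (x : ahom X A) :
  is_kernel f k -> f ⊚ x = 0 -> factors_through x k.
Proof. by move=> [_ H] /H [u [Hu _]]; exists u. Qed.

Lemma cokernel_factor (A B Q X : C) (f : ahom A B) (c : ahom B Q) (x : ahom B X) :
  is_cokernel f c -> x ⊚ f = 0 -> exists u, u ⊚ c = x.
Proof. by move=> [_ H] /H [u [Hu _]]; exists u. Qed.

Lemma cokernel_kills (A B Q X : C) (f : ahom A B) (c : ahom B Q) (x : ahom X B) :
  is_cokernel f c -> factors_through x f -> c ⊚ x = 0.
Proof. by move=> [cf0 _] [u <-]; rewrite acmpA cf0 acmp0l. Qed.

Lemma mono_comp (A B D : C) (f : ahom B D) (g : ahom A B) :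
  mono f -> mono g -> mono (f ⊚ g).
Proof. by move=> mf mg X x y; rewrite -!acmpA => /mf /mg. Qed.

Lemma section_mono (A B : C) (f : ahom A B) : section f -> mono f.
Proof. by move=> [t Ht] X x y E; rewrite -(id_acmp x) -(id_acmp y) -Ht -!acmpA E. Qed.

Lemma section_comp (A B D : C) (f : ahom B D) (g : ahom A B) :
  section f -> section g -> section (f ⊚ g).
Proof.
by move=> [t Ht] [u Hu]; exists (u ⊚ t); rewrite -acmpA (acmpA t) Ht id_acmp.
Qed.

Lemma mono_cokernel_factor (A B Q X : C) (a : ahom A B) (c : ahom B Q) (x : ahom X B) :
  mono a -> is_cokernel a c -> c ⊚ x = 0 -> factors_through x a.
Proof.
move=> ma Hc cx0; have [D [f [fa0 Hf]]] := mono_is_kernel ma.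
have [f' Hf'] := cokernel_factor Hc fa0.
have [u [Hu _]] : exists! u, a ⊚ u = x by apply: Hf; rewrite -Hf' -acmpA cx0 acmp0r.
by exists u.
Qed.

Lemma factors_through_comp (X K M N : C) (x : ahom X M) (k : ahom K M) (f : ahom M N) :
  factors_through x k -> factors_through (f ⊚ x) (f ⊚ k).
Proof. by move=> [u <-]; exists u; rewrite acmpA. Qed.

Lemma proj_fix (A M X : C) (a : ahom A M) (ra : ahom M A) (x : ahom X A) :
  ra ⊚ a = idm A -> a ⊚ ra ⊚ (a ⊚ x) = a ⊚ x.
Proof. by move=> H; rewrite -acmpA (acmpA ra) H id_acmp. Qed.

Lemma proj_compl_kill (A M X : C) (a : ahom A M) (ra : ahom M A) (x : ahom X A) :
  ra ⊚ a = idm A -> (idm M - a ⊚ ra) ⊚ (a ⊚ x) = 0.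
Proof. by move=> H; rewrite acmpBl id_acmp proj_fix // subrr. Qed.

Lemma section_subobject_eq (P P0 M : C) (p : ahom P M) (p0 : ahom P0 M)
    (a : ahom P P0) (b : ahom P0 P) :
  mono p -> p0 ⊚ a = p -> p ⊚ b = p0 -> section p0 -> section p.
Proof.
move=> mp Ha Hb sp0; have ba : b ⊚ a = idm P by apply: mp; rewrite acmp_id acmpA Hb Ha.
by rewrite -Ha; apply: section_comp => //; exists b.
Qed.

Lemma cokernel_split_factor (A M D P : C) (f : ahom A M) (c : ahom M D) (v : ahom D M)
    (p : ahom P M) :
  is_cokernel f c -> c ⊚ v = idm D -> mono p -> factors_through f p ->
  factors_through (idm M - v ⊚ c) p.
Proof.
move=> Hc cv mp fp; have [Y [cp Hcp]] := cokernel_ex p.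
have [z Hz] : exists z, z ⊚ c = cp.
  by apply: (cokernel_factor Hc); apply: cokernel_kills Hcp fp.
apply: (mono_cokernel_factor mp Hcp).
by rewrite acmpBr acmp_id -Hz acmpA -(acmpA z c v) cv acmp_id subrr.
Qed.

Lemma meet2_ex (A B M : C) (a : ahom A M) (b : ahom B M) :
  mono a -> mono b -> exists (P : C) (p : ahom P M), is_meet2 a b p.
Proof.
move=> ma mb; have [Qa [ca Hca]] := cokernel_ex a.
have [X [m Hm]] := kernel_ex (ca ⊚ b).
exists X, (b ⊚ m); split.
- exact: mono_comp mb (kernel_mono Hm).
- by apply: (mono_cokernel_factor ma Hca); rewrite acmpA (proj1 Hm).
- by exists m.
- move=> Y x xa [z Hz].
  have [w Hw] : factors_through z m.
    by apply: (kernel_factor Hm); rewrite -acmpA Hz; apply: cokernel_kills Hca xa.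
  by exists w; rewrite -acmpA Hw.
Qed.

Lemma join2_ex (A B M : C) (a : ahom A M) (b : ahom B M) :
  exists (P : C) (p : ahom P M), is_join2 a b p.
Proof.
have [S [i1 [i2 [p1 [p2 [H11 H22 H12 H21 _]]]]]] := biproduct_ex A B.
have [D [c Hc]] := cokernel_ex (a ⊚ p1 + b ⊚ p2).
have [P [p Hp]] := kernel_ex c.
have fa : (a ⊚ p1 + b ⊚ p2) ⊚ i1 = a.
  by rewrite acmpDl -!acmpA H11 H21 acmp_id acmp0r addr0.
have fb : (a ⊚ p1 + b ⊚ p2) ⊚ i2 = b.
  by rewrite acmpDl -!acmpA H12 H22 acmp_id acmp0r add0r.
exists P, p; split.
- exact: kernel_mono Hp.
- by apply: (kernel_factor Hp); apply: cokernel_kills Hc _; exists i1.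
- by apply: (kernel_factor Hp); apply: cokernel_kills Hc _; exists i2.
- move=> X x mx [a' Ha'] [b' Hb']; have [Qx [cx Hcx]] := cokernel_ex x.
  have [z Hz] : exists z, z ⊚ c = cx.
    apply: (cokernel_factor Hc).
    by rewrite acmpDr -Ha' -Hb' !acmpA (proj1 Hcx) !acmp0l addr0.
  by apply: (mono_cokernel_factor mx Hcx); rewrite -Hz -acmpA (proj1 Hp) acmp0r.
Qed.

Lemma kernel_cover_zero (P Y M : C) (p : ahom P M) (f : ahom P Y) : mono p ->
  (forall (Z : C) (z : ahom Z P), is_kernel f z -> factors_through p (p ⊚ z)) ->
  f = 0.
Proof.
move=> mp H; have [Z [z Hz]] := kernel_ex f; have [w Hw] := H Z z Hz.
have zw : z ⊚ w = idm P by apply: mp; rewrite acmp_id acmpA Hw.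
by rewrite -(acmp_id f) -zw acmpA (proj1 Hz) acmp0l.
Qed.

Lemma join2_epi (A B M P Y : C) (a : ahom A M) (b : ahom B M) (p : ahom P M)
    (f g : ahom P Y) :
  is_join2 a b p ->
  (forall al, p ⊚ al = a -> f ⊚ al = g ⊚ al) ->
  (forall be, p ⊚ be = b -> f ⊚ be = g ⊚ be) -> f = g.
Proof.
move=> [mp [al Hal] [be Hbe] Hu] Ha Hb; apply/eqP; rewrite -subr_eq0; apply/eqP.
apply: (kernel_cover_zero mp) => Z z Hz; apply: Hu.
- exact: mono_comp mp (kernel_mono Hz).
- rewrite -Hal; apply/factors_through_comp/(kernel_factor Hz).
  by rewrite acmpBl Ha ?subrr.
- rewrite -Hbe; apply/factors_through_comp/(kernel_factor Hz).
  by rewrite acmpBl Hb ?subrr.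
Qed.

Lemma join_epi (M P Y : C) (I : finType) (K : I -> C) (k : forall j, ahom (K j) M)
    (p : ahom P M) (f g : ahom P Y) :
  is_join k p -> (forall j (al : ahom (K j) P), p ⊚ al = k j -> f ⊚ al = g ⊚ al) ->
  f = g.
Proof.
move=> [mp pk Hu] H; apply/eqP; rewrite -subr_eq0; apply/eqP.
apply: (kernel_cover_zero mp) => Z z Hz.
apply: Hu => [|j]; first exact: mono_comp mp (kernel_mono Hz).
have [al Hal] := pk j.
rewrite -Hal; apply/factors_through_comp/(kernel_factor Hz).
by rewrite acmpBl H ?subrr.
Qed.

Lemma fully_invariant_factor (K X M : C) (k : ahom K M) (x : ahom X M) (h : ahom M M) :
  fully_invariant k -> factors_through x k -> factors_through (h ⊚ x) k.
Proof.
by move=> [_ Hk] [u <-]; have [a Ha] := Hk h; exists (a ⊚ u); rewrite !acmpA Ha.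
Qed.

Lemma stable_fully_invariant (P M : C) (p : ahom P M) :
  mono p -> (forall h : ahom M M, factors_through (h ⊚ p) p) -> fully_invariant p.
Proof. by move=> mp H; split=> // h; have [a Ha] := H h; exists a. Qed.

Lemma meet2_fully_invariant (A B M P : C) (a : ahom A M) (b : ahom B M) (p : ahom P M) :
  fully_invariant a -> fully_invariant b -> is_meet2 a b p -> fully_invariant p.
Proof.
move=> fa fb [mp pa pb Hu]; apply: stable_fully_invariant => // h.
by apply: Hu; apply: fully_invariant_factor.
Qed.

Lemma meet_fully_invariant (M P : C) (I : finType) (K : I -> C)
    (k : forall j, ahom (K j) M) (p : ahom P M) :
  (forall j, fully_invariant (k j)) -> is_meet k p -> fully_invariant p.
Proof.
move=> fk [mp pk Hu]; apply: stable_fully_invariant => // h.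
by apply: Hu => j; apply: fully_invariant_factor.
Qed.

Lemma fully_invariant_image_factor (K P M : C) (k : ahom K M) (p : ahom P M)
    (h : ahom M M) :
  fully_invariant k -> factors_through k p -> factors_through (h ⊚ k) p.
Proof.
by move=> [_ Hk] [x Hx]; have [a ->] := Hk h; exists (x ⊚ a); rewrite acmpA Hx.
Qed.

Lemma join2_fully_invariant (A B M P : C) (a : ahom A M) (b : ahom B M) (p : ahom P M) :
  fully_invariant a -> fully_invariant b -> is_join2 a b p -> fully_invariant p.
Proof.
move=> fa fb Hj; have [mp _ _ _] := Hj.
apply: stable_fully_invariant => // h; have [Y [cp Hcp]] := cokernel_ex p.
apply: (mono_cokernel_factor mp Hcp); apply: (join2_epi (g := 0) Hj) => x Hx;
  rewrite acmp0l -!acmpA Hx; apply: (cokernel_kills Hcp);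
  by apply: fully_invariant_image_factor => //; exists x.
Qed.

Lemma join_fully_invariant (M P : C) (I : finType) (K : I -> C)
    (k : forall j, ahom (K j) M) (p : ahom P M) :
  (forall j, fully_invariant (k j)) -> is_join k p -> fully_invariant p.
Proof.
move=> fk Hj; have [mp _ _] := Hj.
apply: stable_fully_invariant => // h; have [Y [cp Hcp]] := cokernel_ex p.
apply: (mono_cokernel_factor mp Hcp); apply: (join_epi (g := 0) Hj) => j x Hx.
rewrite acmp0l -!acmpA Hx; apply: (cokernel_kills Hcp).
by apply: fully_invariant_image_factor => //; exists x.
Qed.

Lemma meet2_section (A B L M P : C) (a : ahom A M) (b : ahom B M) (p : ahom P M)
    (ra : ahom M A) (l : ahom L M) :
  is_meet2 b a p -> ra ⊚ a = idm A -> section l -> factors_through p l ->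
  factors_through (a ⊚ ra ⊚ l) b -> section p.
Proof.
move=> [mp _ [al Hal] Hu] Ha sl [q Hq] lb.
have [w Hw] : factors_through (a ⊚ ra ⊚ l) p.
  by apply: Hu => //; exists (ra ⊚ l); rewrite acmpA.
have wq : w ⊚ q = idm P.
  by apply: mp; rewrite acmp_id acmpA Hw -acmpA Hq -Hal proj_fix.
by rewrite -Hq; apply: section_comp => //; exists w.
Qed.

Lemma join2_section (A B M P : C) (a : ahom A M) (b : ahom B M) (p : ahom P M)
    (ra : ahom M A) (y : ahom M P) :
  is_join2 b a p -> ra ⊚ a = idm A ->
  p ⊚ y ⊚ ((idm M - a ⊚ ra) ⊚ b) = (idm M - a ⊚ ra) ⊚ b -> section p.
Proof.
move=> Hj Ha Hy; have [mp _ [al Hal] _] := Hj.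
pose r := al ⊚ ra + y ⊚ (idm M - a ⊚ ra).
have pr : p ⊚ r = a ⊚ ra + p ⊚ y ⊚ (idm M - a ⊚ ra).
  by rewrite /r acmpDr !acmpA Hal.
have rp_id X (x : ahom X P) :
    p ⊚ r ⊚ (p ⊚ x) = p ⊚ x -> r ⊚ p ⊚ x = idm P ⊚ x.
  by move=> E; apply: mp; rewrite id_acmp !acmpA -acmpA E.
exists r; apply: (join2_epi Hj) => x Hx; apply: rp_id.
  by rewrite Hx pr acmpDl -(acmpA (p ⊚ y)) Hy acmpBl id_acmp addrC subrK.
rewrite Hx pr acmpDl -(acmpA (p ⊚ y)) -(acmpA a) Ha acmp_id acmpBl id_acmp.
by rewrite -(acmpA a) Ha acmp_id subrr acmp0r addr0.
Qed.

Definition is_meet_seq (M : C) (I : finType) (K : I -> C) (k : forall j, ahom (K j) M)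
    (r : seq I) (P : C) (p : ahom P M) : Prop :=
  [/\ mono p, {in r, forall j, factors_through p (k j)} &
      forall (X : C) (x : ahom X M), {in r, forall j, factors_through x (k j)} ->
        factors_through x p].

Definition is_join_seq (M : C) (I : finType) (K : I -> C) (k : forall j, ahom (K j) M)
    (r : seq I) (P : C) (p : ahom P M) : Prop :=
  [/\ mono p, {in r, forall j, factors_through (k j) p} &
      forall (X : C) (x : ahom X M), mono x ->
        {in r, forall j, factors_through (k j) x} -> factors_through p x].

Section SelfSplit.
Variables (s : bool) (F M Q : C) (i : ahom F M) (d : ahom M Q).

Lemma self_split_section : is_kernel d i -> self_split s i d -> section i.
Proof. by move=> Hi Hss; apply: (proj1 (Hss (idm M) F i _)); rewrite acmp_id. Qed.

Lemma self_split_meet2_section (A B P : C) (a : ahom A M) (b : ahom B M) (p : ahom P M)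
    (ra : ahom M A) (rb : ahom M B) (cb : ahom F B) :
  is_kernel d i -> self_split s i d -> ra ⊚ a = idm A -> rb ⊚ b = idm B ->
  b ⊚ cb = i -> is_meet2 b a p -> section p.
Proof.
move=> Hi Hss Ha Hb Hcb Hm; set e := idm M - b ⊚ rb.
have [L [l Hl]] := kernel_ex (d ⊚ (e ⊚ (a ⊚ ra))).
have [sl _] := Hss _ L l Hl.
have [_ [be Hbe] [al Hal] _] := Hm.
apply: (meet2_section Hm Ha sl).
  apply: (kernel_factor Hl); rewrite -acmpA -(acmpA e) -Hal proj_fix // Hal -Hbe.
  by rewrite proj_compl_kill // acmp0r.
have eeK : e ⊚ e = e by rewrite {2}/e acmpBr acmp_id proj_compl_kill // subr0.
have [y Hy] : factors_through (e ⊚ (a ⊚ ra) ⊚ l) i.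
  by apply: (kernel_factor Hi); rewrite acmpA (proj1 Hl).
have el0 : e ⊚ (a ⊚ ra ⊚ l) = 0.
  by rewrite acmpA -eeK -(acmpA e e) -(acmpA e) -Hy -Hcb -acmpA proj_compl_kill.
exists (rb ⊚ (a ⊚ ra ⊚ l)); apply/eqP; rewrite acmpA eq_sym -subr_eq0.
by rewrite -{1}(id_acmp (a ⊚ ra ⊚ l)) -acmpBl el0.
Qed.

Lemma dual_self_split_section : short_exact i d -> dual_self_split s i d -> section i.
Proof.
move=> [mi _ _ Hd] Hds.
have [[v Hv] _] : cosummand s d by apply: (Hds (idm M)); rewrite id_acmp.
have [y Hy] := cokernel_split_factor Hd Hv mi (ex_intro _ (idm F) (acmp_id i)).
exists y; apply: mi.
by rewrite acmp_id acmpA Hy acmpBl id_acmp -acmpA (proj1 Hd) acmp0r subr0.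
Qed.

Lemma dual_self_split_join2_section (A B P : C) (a : ahom A M) (b : ahom B M)
    (p : ahom P M) (ra : ahom M A) (rb : ahom M B) (cb : ahom B F) :
  dual_self_split s i d -> ra ⊚ a = idm A -> rb ⊚ b = idm B ->
  i ⊚ cb = b -> is_join2 b a p -> section p.
Proof.
move=> Hds Ha Hb Hcb Hj; set e := idm M - a ⊚ ra.
have [D [c Hc]] := cokernel_ex (e ⊚ (b ⊚ rb) ⊚ i).
have [[v Hv] _] := Hds _ D c Hc.
have [mp [be Hbe] [al Hal] _] := Hj.
have [y Hy] : factors_through (idm M - v ⊚ c) p.
  apply: (cokernel_split_factor Hc Hv mp).
  exists (be ⊚ (rb ⊚ i) - al ⊚ (ra ⊚ (b ⊚ (rb ⊚ i)))).
  by rewrite acmpBr !acmpA Hbe Hal /e acmpBl id_acmp !acmpBl.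
have ceb : c ⊚ (e ⊚ b) = 0.
  apply: (cokernel_kills Hc); exists cb.
  by rewrite -!acmpA Hcb Hb acmp_id.
apply: (join2_section Hj Ha (y := y)).
by rewrite Hy acmpBl id_acmp -acmpA ceb acmp0r subr0.
Qed.

Section Families.
Variables (I : finType) (K : I -> C) (k : forall j, ahom (K j) M).
Hypothesis sk : forall j, section (k j).

Lemma self_split_meet_seq_section :
  is_kernel d i -> self_split s i d -> (forall j, factors_through i (k j)) ->
  forall r, exists (P : C) (p : ahom P M), is_meet_seq k r p /\ section p.
Proof.
move=> Hi Hss ik; elim=> [|j r [P' [p' [[mp' p'k Hu'] [r' Hr']]]]].
  exists M, (idm M); split; last by exists (idm M); rewrite id_acmp.
  split=> [X g h | // | X x _]; first by rewrite !id_acmp.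
  by exists x; rewrite id_acmp.
have [rb Hrb] := sk j; have [cb Hcb] := ik j.
have [P [p Hm]] := meet2_ex (section_mono (sk j)) mp'.
exists P, p; split; last exact: self_split_meet2_section Hi Hss Hr' Hrb Hcb Hm.
have [mp pj [a Ha] Hu] := Hm; split=> // [j' | X x Hx].
  rewrite inE => /predU1P [-> // | /p'k [c Hc]].
  by exists (c ⊚ a); rewrite acmpA Hc Ha.
apply: Hu; first by apply: Hx; rewrite inE eqxx.
by apply: Hu' => j' j'r; apply: Hx; rewrite inE j'r orbT.
Qed.

Lemma self_split_meet_section (P : C) (p : ahom P M) :
  is_kernel d i -> self_split s i d -> (forall j, factors_through i (k j)) ->
  is_meet k p -> section p.
Proof.
move=> Hi Hss ik [mp pk Hu].
have [P0 [p0 [[_ p0k Hu0] sp0]]] := self_split_meet_seq_section Hi Hss ik (enum I).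
have [a Ha] : factors_through p p0 by apply: Hu0 => j _; apply: pk.
have [b Hb] : factors_through p0 p by apply: Hu => j; apply: p0k; rewrite mem_enum.
exact: section_subobject_eq mp Ha Hb sp0.
Qed.

Lemma dual_self_split_join_seq_section :
  dual_self_split s i d -> (forall j, factors_through (k j) i) ->
  forall r, exists (P : C) (p : ahom P M), is_join_seq k r p /\ section p.
Proof.
move=> Hds ki; elim=> [|j r [P' [p' [[mp' p'k Hu'] [r' Hr']]]]].
  have [Z HZ] := zero_object_ex.
  exists Z, 0; split; last by exists 0; apply: (proj1 (HZ Z)).
  split=> [X g h _ | // | X x _ _]; first exact: (proj2 (HZ X)).
  by exists 0; rewrite acmp0r.
have [rb Hrb] := sk j; have [cb Hcb] := ki j.
have [P [p Hj]] := join2_ex (k j) p'.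
exists P, p; split; last exact: dual_self_split_join2_section Hds Hr' Hrb Hcb Hj.
have [mp pj [a Ha] Hu] := Hj; split=> // [j' | X x mx Hx].
  rewrite inE => /predU1P [-> // | /p'k [c Hc]].
  by exists (a ⊚ c); rewrite acmpA Ha Hc.
apply: Hu => //; first by apply: Hx; rewrite inE eqxx.
by apply: Hu' => // j' j'r; apply: Hx; rewrite inE j'r orbT.
Qed.

Lemma dual_self_split_join_section (P : C) (p : ahom P M) :
  dual_self_split s i d -> (forall j, factors_through (k j) i) ->
  is_join k p -> section p.
Proof.
move=> Hds ki [mp pk Hu].
have [P0 [p0 [[mp0 p0k Hu0] sp0]]] := dual_self_split_join_seq_section Hds ki (enum I).
have [a Ha] : factors_through p p0.
  by apply: Hu => // j; apply: p0k; rewrite mem_enum.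
have [b Hb] : factors_through p0 p by apply: Hu0 => // j _; apply: pk.
exact: section_subobject_eq mp Ha Hb sp0.
Qed.

End Families.

Lemma self_split_meet2_summand (K P : C) (k : ahom K M) (p : ahom P M) :
  fi_short_exact i d -> self_split s i d -> summand s k -> is_meet2 i k p ->
  summand s p.
Proof.
move=> [[_ _ Hi _] fii] Hss [[rk Hrk] fik] Hm.
split=> [|/fik fik']; last exact: meet2_fully_invariant fii fik' Hm.
have [ri Hri] := self_split_section Hi Hss.
exact: self_split_meet2_section Hi Hss Hrk Hri (acmp_id i) Hm.
Qed.

Lemma self_split_SIP :
  is_kernel d i -> self_split s i d ->
  SIP (fun (K : C) (k : ahom K M) => summand s k /\ factors_through i k).
Proof.
move=> Hi Hss I K k Hk P p Hm; have [_ _ Hu] := Hm.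
split; last by apply: Hu => j; case: (Hk j).
split=> [|sT].
  by apply: (self_split_meet_section _ Hi Hss _ Hm) => j; case: (Hk j) => [[]].
by apply: (meet_fully_invariant _ Hm) => j; case: (Hk j) => [[_ /(_ sT)]].
Qed.

Lemma dual_self_split_join2_summand (K P : C) (k : ahom K M) (p : ahom P M) :
  fi_short_exact i d -> dual_self_split s i d -> summand s k -> is_join2 i k p ->
  summand s p.
Proof.
move=> [Hses fii] Hds [[rk Hrk] fik] Hj.
split=> [|/fik fik']; last exact: join2_fully_invariant fii fik' Hj.
have [ri Hri] := dual_self_split_section Hses Hds.
exact: dual_self_split_join2_section Hds Hrk Hri (acmp_id i) Hj.
Qed.

Lemma dual_self_split_SSP :
  mono i -> dual_self_split s i d ->
  SSP (fun (K : C) (k : ahom K M) => summand s k /\ factors_through k i).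
Proof.
move=> mi Hds I K k Hk P p Hj; have [_ _ Hu] := Hj.
split; last by apply: Hu => // j; case: (Hk j).
split=> [|sT].
  by apply: (dual_self_split_join_section _ Hds _ Hj) => j; case: (Hk j) => [[]].
by apply: (join_fully_invariant _ Hj) => j; case: (Hk j) => [[_ /(_ sT)]].
Qed.

End SelfSplit.
End AbelianCategory.

Unset Implicit Arguments.

Theorem corollary3p7 (s : bool) (C : abelian_category) (F M Q : C)
    (i : ahom F M) (d : ahom M Q) :
  fi_short_exact i d ->
  (self_split s i d ->
     (forall (K : C) (k : ahom K M), summand s k ->
        forall (P : C) (p : ahom P M), is_meet2 i k p -> summand s p) /\
     SIP (fun (K : C) (k : ahom K M) => summand s k /\ factors_through i k)) /\
  (dual_self_split s i d ->
     (forall (K : C) (k : ahom K M), summand s k ->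
        forall (P : C) (p : ahom P M), is_join2 i k p -> summand s p) /\
     SSP (fun (K : C) (k : ahom K M) => summand s k /\ factors_through k i)).
Proof.
move=> Hfi; have [[mi _ Hi _] _] := Hfi; split=> [Hss | Hds]; split.
- by move=> K k sk P p; apply: self_split_meet2_summand Hfi Hss sk.
- exact: self_split_SIP Hi Hss.
- by move=> K k sk P p; apply: dual_self_split_join2_summand Hfi Hds sk.
- exact: dual_self_split_SSP mi Hds.
Qed.
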